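(* Let $R$ be a finite commutative ring with Jacobson radical $\mathcal{J}$, and write $R/\mathcal{J}\cong F_1\times\cdots\times F_\ell$ with each $F_i$ a (finite) field. Then for $n\ge k\ge0$, $$|\mathrm{Gr}^n_k(R)|=|\mathcal{J}|^{k(n-k)}\prod_{i=1}^{\ell}|\mathrm{Gr}^n_k(F_i)|.$$
   Context: For a commutative ring $A$ and $n\ge k\ge0$, the Grassmannian $\mathrm{Gr}^n_k(A)$ is the set of rank $k$ direct summands $V$ of $A^n$ such that $V$ and $A^n/V$ are free. For a field $F$, this is the usual set of $k$-dimensional subspaces of $F^n$. *)

From HB Require Import structures.
From mathcomp Require Import all_boot all_order all_algebra.
From mathcomp Require Import boolp.
Set Implicit Arguments. Unset Strict Implicit. Unset Printing Implicit Defensive.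
Import GRing.Theory.
Local Open Scope ring_scope.

Section Ideals.
Variable R : finComPzRingType.

Definition is_ideal (I : {set R}) : bool :=
  [&& (0 : R) \in I,
      [forall x, forall y, (x \in I) ==> (y \in I) ==> (x + y \in I)] &
      [forall r, forall x, (x \in I) ==> (r * x \in I)]].

Definition is_maximal_ideal (I : {set R}) : bool :=
  [&& is_ideal I, (1 : R) \notin I &
      [forall K : {set R}, is_ideal K ==> (I \subset K) ==> (K == I) || (K == setT)]].

Definition jacobson : {set R} :=
  [set x | [forall I : {set R}, is_maximal_ideal I ==> (x \in I)]].
End Ideals.

Section Grass.
Variable A : finComPzRingType.
Variable n : nat.

Definition is_submodule (V : {set 'rV[A]_n}) : Prop :=
  (0 : 'rV[A]_n) \in V /\
  (forall x y, x \in V -> y \in V -> x + y \in V) /\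
  (forall (a : A) x, x \in V -> a *: x \in V).

Definition is_direct_summand (V : {set 'rV[A]_n}) : Prop :=
  exists W : {set 'rV[A]_n}, is_submodule W /\
    (forall x, x \in V -> x \in W -> x = 0) /\
    (forall z, exists2 x, x \in V & exists2 y, y \in W & z = x + y).

Definition is_free_of_rank (V : {set 'rV[A]_n}) (k : nat) : Prop :=
  exists B : 'M[A]_(k, n),
    (forall c : 'rV[A]_k, c *m B = 0 -> c = 0) /\
    (forall x, x \in V <-> exists c : 'rV[A]_k, x = c *m B).

(* A^n / V is free: some finite family (rows of C) has images in A^n/V
   forming a basis of A^n/V (spanning and linearly independent modulo V) *)
Definition quotient_is_free (V : {set 'rV[A]_n}) : Prop :=
  exists (m : nat) (C : 'M[A]_(m, n)),
    (forall c : 'rV[A]_m, c *m C \in V -> c = 0) /\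
    (forall z : 'rV[A]_n, exists c : 'rV[A]_m, z - c *m C \in V).

Definition in_Grassmannian (k : nat) (V : {set 'rV[A]_n}) : Prop :=
  [/\ is_submodule V, is_direct_summand V, is_free_of_rank V k & quotient_is_free V].

Definition Grassmannian (k : nat) : {set {set 'rV[A]_n}} :=
  [set V | `[< in_Grassmannian k V >]].
End Grass.

From HB Require Import structures.
From mathcomp Require Import all_boot all_order all_algebra.
From mathcomp Require Import boolp ring.
Set Implicit Arguments. Unset Strict Implicit. Unset Printing Implicit Defensive.
Import GRing.Theory.
Local Open Scope ring_scope.

(* The group GL_(k+r)(A) acts on Gr^(k+r)_k(A) by sending P to the span of its
   first k rows; this map is onto (a basis of V completed by lifts of a basis
   of A^n/V is an invertible matrix), and two invertible matrices have the same
   image iff they differ on the left by a block lower-triangular invertible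
   matrix.  Hence
     |GL_(k+r)(A)| = |Gr^(k+r)_k(A)| * |GL_k(A)| * |GL_r(A)| * |A|^(kr).
   For A = R, an element is a unit iff all its images in the F_i are nonzero,
   since 1 + J consists of units; so GL_m(R) is the full preimage of
   prod_i GL_m(F_i) under reduction, whose fibres are cosets of M_m(J):
     |GL_m(R)| = |J|^(m^2) * prod_i |GL_m(F_i)|,   |R| = |J| * prod_i |F_i|.
   Substituting and cancelling leaves |J|^((k+r)^2 - k^2 - r^2 - kr) = |J|^(kr). *)

Definition has_inv (A : finComPzRingType) (x : A) := [exists y, x * y == 1].

Lemma has_inv_field (K : finFieldType) (x : K) : has_inv x = (x != 0).
Proof.
apply/existsP/idP=> [[y /eqP e]|nz]; last by exists x^-1; rewrite mulfV.
by apply/eqP=> x0; move/eqP: e; rewrite x0 mul0r eq_sym oner_eq0.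
Qed.

Section GeneralLinear.
Variable A : finComPzRingType.

Definition GLmx m := [set P : 'M[A]_m | has_inv (\det P)].

Lemma GLmxP m (P : 'M[A]_m) : reflect (exists Q, P *m Q = 1%:M) (P \in GLmx m).
Proof.
apply: (iffP idP).
  rewrite inE => /existsP[y /eqP dy]; exists (y *: \adj P).
  by rewrite -scalemxAr mul_mx_adj scale_scalar_mx mulrC dy.
case=> Q PQ; rewrite inE; apply/existsP; exists (\det Q).
by rewrite -det_mulmx PQ det1.
Qed.

Lemma GLmx_inv m (P : 'M[A]_m) :
  P \in GLmx m -> exists Q, P *m Q = 1%:M /\ Q *m P = 1%:M.
Proof. by move/GLmxP=> [Q PQ]; exists Q; split=> //; apply: mulmx1C. Qed.

Lemma GLmxM m (P Q : 'M[A]_m) : P \in GLmx m -> Q \in GLmx m -> P *m Q \in GLmx m.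
Proof.
move=> /GLmxP[P' HP] /GLmxP[Q' HQ]; apply/GLmxP; exists (Q' *m P').
by rewrite mulmxA -(mulmxA P) HQ mulmx1 HP.
Qed.

Lemma GLmx1 m : (1%:M : 'M[A]_m) \in GLmx m.
Proof. by apply/GLmxP; exists 1%:M; rewrite mulmx1. Qed.

Lemma GLmx_lblock m1 m2 (a : 'M[A]_m1) (c : 'M_(m2, m1)) d :
  (block_mx a 0 c d \in GLmx (m1 + m2)) = (a \in GLmx m1) && (d \in GLmx m2).
Proof.
rewrite !inE det_lblock; apply/existsP/andP=> [[y /eqP e]|].
  split; apply/existsP; [exists (\det d * y) | exists (\det a * y)].
    by rewrite mulrA e.
  by rewrite mulrA (mulrC (\det d)) e.
case=> /existsP[y /eqP ey] /existsP[z /eqP ez].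
by exists (y * z); rewrite mulrACA ey ez mulr1.
Qed.

Lemma GLmx_of_surj m (P : 'M[A]_m) :
  (forall z : 'rV_m, exists u : 'rV_m, u *m P = z) -> P \in GLmx m.
Proof.
move=> Psurj; have Psurj' (z : 'rV_m) : exists u, u *m P == z.
  by have [u uP] := Psurj z; exists u; rewrite uP.
apply/GLmxP; exists (\matrix_i xchoose (Psurj' (row i 1%:M))); apply: mulmx1C.
by apply/row_matrixP=> i; rewrite row_mul rowK; apply/eqP/(xchooseP (Psurj' _)).
Qed.

Lemma card_rV_inj m p : (1 : A) != 0 -> #|{: 'rV[A]_m}| = #|{: 'rV[A]_p}| -> m = p.
Proof.
move=> A1 /eqP; have gt1 : (1 < #|A|)%N by apply/card_gt1P; exists 1, 0.
by rewrite !card_mx eqn_exp2l // !mul1n => /eqP.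
Qed.

End GeneralLinear.

Section GrassmannianOrbit.
Variables (A : finComPzRingType) (k r : nat).

Definition span_usub (P : 'M[A]_(k + r)) : {set 'rV[A]_(k + r)} :=
  [set x | [exists c : 'rV_k, x == c *m usubmx P]].

Lemma span_usubP (P : 'M[A]_(k + r)) x :
  x \in span_usub P <-> exists c, x = c *m usubmx P.
Proof.
by rewrite inE; split=> [/existsP[c /eqP->]|[c ->]]; [exists c|apply/existsP; exists c].
Qed.

Lemma mulmx_hsub (P : 'M[A]_(k + r)) (u : 'rV[A]_(k + r)) :
  u *m P = lsubmx u *m usubmx P + rsubmx u *m dsubmx P.
Proof. by rewrite -{1}(hsubmxK u) -{1}(vsubmxK P) mul_row_col. Qed.

Lemma span_usub_Grassmannian (P : 'M[A]_(k + r)) :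
  P \in GLmx A (k + r) -> in_Grassmannian k (span_usub P).
Proof.
move=> /GLmx_inv[Q [PQ QP]].
set B := usubmx P; set C := dsubmx P.
have inj u : u *m P = 0 -> u = 0.
  by move=> uP; rewrite -[u]mulmx1 -PQ mulmxA uP mul0mx.
have row_mxP (c : 'rV_k) (d : 'rV_r) : row_mx c d *m P = c *m B + d *m C.
  by rewrite mulmx_hsub row_mxKl row_mxKr.
have span_submodule (M : 'M[A]_(_, k + r)) :
    is_submodule [set x | [exists c, x == c *m M]].
  split; first by rewrite inE; apply/existsP; exists 0; rewrite mul0mx.
  split=> [x y|a x]; rewrite !inE.
    move=> /existsP[c /eqP->] /existsP[d /eqP->].
    by apply/existsP; exists (c + d); rewrite mulmxDl.
  by move=> /existsP[c /eqP->]; apply/existsP; exists (a *: c); rewrite scalemxAl.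
split; first exact: span_submodule.
- exists [set x | [exists d : 'rV_r, x == d *m C]].
  split; first exact: span_submodule.
  split=> [x /span_usubP[c ->]|z].
    rewrite inE => /existsP[d /eqP cd].
    have /inj/eqP : row_mx c (- d) *m P = 0 by rewrite row_mxP cd mulNmx subrr.
    by rewrite row_mx_eq0 => /andP[/eqP-> _]; rewrite mul0mx.
  exists (lsubmx (z *m Q) *m B); first by apply/span_usubP; eexists.
  exists (rsubmx (z *m Q) *m C); first by rewrite inE; apply/existsP; eexists.
  by rewrite -mulmx_hsub -mulmxA QP mulmx1.
- exists B; split=> [c cB|x]; last exact: span_usubP.
  have /inj/eqP : row_mx c 0 *m P = 0 by rewrite row_mxP cB mul0mx addr0.
  by rewrite row_mx_eq0 => /andP[/eqP-> _].
- exists r, C; split=> [c /span_usubP[d cd]|z].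
    have /inj/eqP : row_mx (- d) c *m P = 0 by rewrite row_mxP cd mulNmx addNr.
    by rewrite row_mx_eq0 => /andP[_ /eqP->].
  exists (rsubmx (z *m Q)); apply/span_usubP; exists (lsubmx (z *m Q)).
  by rewrite -[z in z - _]mulmx1 -QP mulmxA mulmx_hsub addrK.
Qed.

Lemma Grassmannian_span_usub (V : {set 'rV[A]_(k + r)}) :
  in_Grassmannian k V -> exists2 P, P \in GLmx A (k + r) & span_usub P = V.
Proof.
move=> [[V0 _] _ [B [Binj Bspan]] [m [C [Cind Cspan]]]].
have [A0|A1] := eqVneq (1 : A) 0.
  have all0 (x : 'rV[A]_(k + r)) : x = 0.
    by apply/matrixP=> i j; rewrite mxE -[x i j]mulr1 A0 mulr0.
  exists 1%:M; first exact: GLmx1.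
  by apply/setP=> x; rewrite (all0 x) V0; apply/span_usubP; exists 0; rewrite mul0mx.
pose f (u : 'rV[A]_(k + m)) := u *m col_mx B C.
have f_surj z : exists u, f u = z.
  have [c /Bspan[d Hd]] := Cspan z.
  by exists (row_mx d c); rewrite /f mul_row_col -Hd subrK.
have f_inj : injective f.
  move=> u u' /eqP; rewrite -subr_eq0 /f -mulmxBl -[u - u']hsubmxK mul_row_col.
  rewrite addr_eq0 => /eqP e; apply/eqP; rewrite -subr_eq0 -[u - u']hsubmxK.
  have c0 : rsubmx (u - u') = 0.
    by apply: Cind; apply/Bspan; exists (- lsubmx (u - u')); rewrite mulNmx e opprK.
  by rewrite c0 (Binj _ (etrans e _)) ?row_mx0 // c0 mul0mx oppr0.
have emr : m = r.
  apply/(@addnI k)/(card_rV_inj A1); rewrite -!cardsT -(card_imset [set: _] f_inj).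
  congr #|(_ : {set _})|; apply/setP=> z; rewrite !inE.
  by have [u <-] := f_surj z; rewrite imset_f.
subst m; exists (col_mx B C); first by apply: GLmx_of_surj.
apply/setP=> x; apply/idP/idP=> [/span_usubP|/Bspan xB].
  by rewrite col_mxKu => /Bspan.
by apply/span_usubP; rewrite col_mxKu.
Qed.

Definition lower_GLmx := [set g in GLmx A (k + r) | ursubmx g == 0].

Lemma lower_GLmxE g : g \in lower_GLmx ->
  [/\ g = block_mx (ulsubmx g) 0 (dlsubmx g) (drsubmx g),
      ulsubmx g \in GLmx A k & drsubmx g \in GLmx A r].
Proof.
rewrite inE => /andP[gGL /eqP g0].
have eg : g = block_mx (ulsubmx g) 0 (dlsubmx g) (drsubmx g) by rewrite -g0 submxK.
by move: gGL; rewrite {1}eg GLmx_lblock => /andP[].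
Qed.

Lemma lower_GLmx1 : 1%:M \in lower_GLmx.
Proof. by rewrite inE GLmx1 (scalar_mx_block k r) block_mxKur eqxx. Qed.

Lemma span_usub_mul g P : g \in lower_GLmx -> span_usub (g *m P) = span_usub P.
Proof.
case/lower_GLmxE=> eg /GLmx_inv[a' [_ a'a]] _.
have eu : usubmx (g *m P) = ulsubmx g *m usubmx P.
  by rewrite -mul_usub_mx {1}eg block_mxEv col_mxKu -{1}(vsubmxK P) mul_row_col mul0mx addr0.
apply/setP=> x; apply/idP/idP=> /span_usubP[c ->]; apply/span_usubP; rewrite eu.
  by exists (c *m ulsubmx g); rewrite mulmxA.
by exists (c *m a'); rewrite -mulmxA (mulmxA a') a'a mul1mx.
Qed.

Lemma span_usub_fiber P : P \in GLmx A (k + r) ->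
  [set Q in GLmx A (k + r) | span_usub Q == span_usub P] = [set g *m P | g in lower_GLmx].
Proof.
move=> PGL; have [P' [PP' P'P]] := GLmx_inv PGL.
have P'GL : P' \in GLmx A (k + r) by apply/GLmxP; exists P.
apply/setP=> Q; rewrite inE; apply/andP/imsetP=> [[QGL /eqP eQP]|[g gL ->]].
  exists (Q *m P'); last by rewrite -mulmxA P'P mulmx1.
  rewrite inE GLmxM //= /ursubmx -mul_usub_mx.
  have rowQ i : exists c : 'rV_k, row i (usubmx Q) == c *m usubmx P.
    have : row i (usubmx Q) \in span_usub P.
      by rewrite -eQP; apply/span_usubP; exists (row i 1%:M); rewrite -row_mul mul1mx.
    by case/span_usubP=> c ->; exists c.
  have -> : usubmx Q = (\matrix_i xchoose (rowQ i)) *m usubmx P.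
    by apply/row_matrixP=> i; rewrite row_mul rowK; apply/eqP/(xchooseP (rowQ i)).
  rewrite -mulmxA mul_usub_mx PP'.
  by rewrite (scalar_mx_block k r) block_mxEv col_mxKu mul_mx_row row_mxKr mulmx0.
rewrite span_usub_mul //; split=> //; apply: GLmxM PGL.
by case/lower_GLmxE: gL => eg aGL dGL; rewrite eg GLmx_lblock aGL dGL.
Qed.

Lemma card_lower_GLmx : #|lower_GLmx| = (#|GLmx A k| * #|GLmx A r| * #|A| ^ (k * r))%N.
Proof.
pose h (t : 'M[A]_k * 'M[A]_(r, k) * 'M[A]_r) := block_mx t.1.1 0 t.1.2 t.2.
have h_inj : injective h.
  move=> [[a c] d] [[a' c'] d'] /= e.
  move: (congr1 ulsubmx e) (congr1 dlsubmx e) (congr1 drsubmx e).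
  by rewrite !block_mxKul !block_mxKdl !block_mxKdr /= => -> -> ->.
have -> : lower_GLmx = h @: setX (setX (GLmx A k) setT) (GLmx A r).
  apply/setP=> g; apply/idP/imsetP=> [gL|[[[a c] d]]].
    case/lower_GLmxE: (gL) => eg aGL dGL.
    by exists (ulsubmx g, dlsubmx g, drsubmx g); first by rewrite !in_setX aGL dGL in_setT.
  rewrite !in_setX in_setT andbT /= => /andP[aGL dGL] ->.
  by rewrite inE GLmx_lblock aGL dGL block_mxKur eqxx.
by rewrite (card_imset _ h_inj) !cardsX cardsT card_mx mulnAC [(r * k)%N]mulnC.
Qed.

Lemma card_GLmx_Grassmannian :
  #|GLmx A (k + r)| = (#|Grassmannian A (k + r) k| * #|lower_GLmx|)%N.
Proof.
rewrite -sum1_card (partition_big span_usub (mem (Grassmannian A (k + r) k))) /=;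
  last by move=> P PGL; rewrite inE; apply/asboolP/span_usub_Grassmannian.
rewrite -sum_nat_const; apply: eq_bigr=> V.
rewrite inE => /asboolP/Grassmannian_span_usub[P PGL <-].
rewrite sum1dep_card span_usub_fiber //; apply: card_imset.
have [P' [PP' _]] := GLmx_inv PGL.
by move=> g g' e; rewrite -[g]mulmx1 -PP' mulmxA e -mulmxA PP' mulmx1.
Qed.

End GrassmannianOrbit.

Section Jacobson.
Variable R : finComPzRingType.

Lemma is_idealP (I : {set R}) :
  reflect [/\ 0 \in I, forall x y, x \in I -> y \in I -> x + y \in I &
              forall a x, x \in I -> a * x \in I] (is_ideal I).
Proof.
apply: (iffP and3P)=> [[I0 /forallP ID /forallP IM]|[I0 ID IM]]; split=> //.
- by move=> x y xI yI; move: (ID x) => /forallP/(_ y); rewrite xI yI.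
- by move=> a x xI; move: (IM a) => /forallP/(_ x); rewrite xI.
- by apply/forallP=> x; apply/forallP=> y; apply/implyP=> xI; apply/implyP; apply: ID.
- by apply/forallP=> a; apply/forallP=> x; apply/implyP; apply: IM.
Qed.

Lemma jacobson0 : (0 : R) \in jacobson R.
Proof.
rewrite inE; apply/forallP=> M; apply/implyP=> /and3P[/is_idealP[] //].
Qed.

Lemma exists_maximal_ideal (I : {set R}) : is_ideal I -> (1 : R) \notin I ->
  exists2 M, is_maximal_ideal M & I \subset M.
Proof.
move=> Iid I1.
pose proper_over (K : {set R}) := [&& is_ideal K, I \subset K & (1 : R) \notin K].
have [|M /and3P[Mid IM M1] Mmax] := @arg_maxnP _ I proper_over (fun K => #|K|).
  by rewrite /proper_over Iid subxx.
exists M => //; apply/and3P; split=> //.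
apply/forallP=> K; apply/implyP=> Kid; apply/implyP=> MK.
have [K1|K1] := boolP ((1 : R) \in K).
  apply/orP; right; apply/eqP/setP=> x; rewrite inE.
  by have [_ _ KM] := is_idealP _ Kid; rewrite -[x]mulr1 KM.
apply/orP; left; rewrite eq_sym eqEcard MK /=.
by apply: Mmax; rewrite /proper_over Kid K1 (subset_trans IM MK).
Qed.

(* If 1 + j were not a unit, the ideal (1 + j) would lie in a maximal ideal,
   which also contains j and hence 1. *)
Lemma one_add_jacobson_unit j : j \in jacobson R -> has_inv (1 + j).
Proof.
move=> jJ; apply: contraT => ninv.
pose I := [set y | [exists x, y == (1 + j) * x]].
have Iid : is_ideal I.
  apply/is_idealP; split=> [|x y|a x]; rewrite !inE.
  - by apply/existsP; exists 0; rewrite mulr0.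
  - move=> /existsP[a /eqP->] /existsP[b /eqP->].
    by apply/existsP; exists (a + b); rewrite mulrDr.
  - by move=> /existsP[b /eqP->]; apply/existsP; exists (a * b); rewrite mulrCA.
have I1 : (1 : R) \notin I.
  rewrite inE; apply: contra ninv => /existsP[x /eqP e].
  by apply/existsP; exists x; rewrite -e.
have [M Mmax IM] := exists_maximal_ideal Iid I1.
have jM : j \in M by move: jJ; rewrite inE => /forallP/(_ M); rewrite Mmax.
have [/is_idealP[_ MD MM] M1 _] := and3P Mmax.
have j1M : 1 + j \in M.
  by apply: (subsetP IM); rewrite inE; apply/existsP; exists 1; rewrite mulr1.
have := MD _ _ j1M (MM (- 1) _ jM).
by rewrite mulN1r addrK (negbTE M1).
Qed.

End Jacobson.

Section Reduction.
Variables (R : finComPzRingType) (l : nat) (F : 'I_l -> finFieldType)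
  (phi : forall i : 'I_l, {rmorphism R -> F i}).
Hypothesis phi_ker : forall x : R, (forall i, phi i x = 0) <-> x \in jacobson R.
Hypothesis phi_surj :
  forall y : (forall i : 'I_l, F i), exists x : R, forall i, phi i x = y i.

Lemma has_inv_reduce (x : R) : has_inv x = [forall i, phi i x != 0].
Proof.
apply/existsP/forallP=> [[y /eqP xy] i|x_nz].
  apply/eqP=> x0; have := congr1 (phi i) xy; rewrite rmorphM rmorph1 x0 mul0r.
  by move/eqP; rewrite eq_sym oner_eq0.
have [y Hy] := phi_surj (fun i => (phi i x)^-1).
have /phi_ker/one_add_jacobson_unit/existsP[z] : forall i, phi i (x * y - 1) = 0.
  by move=> i; rewrite rmorphB rmorphM rmorph1 Hy mulfV ?subrr ?x_nz.
by rewrite addrC subrK -mulrA => xyz; exists (y * z).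
Qed.

Section ReduceMatrix.
Variables m p : nat.

Definition reduce_mx (P : 'M[R]_(m, p)) : {dffun forall i, 'M[F i]_(m, p)} :=
  [ffun i => map_mx (phi i) P].

Definition jacobson_mx := [set D : 'M[R]_(m, p) | [forall a, forall b, D a b \in jacobson R]].

Lemma eq_reduce_mx P P' : (reduce_mx P == reduce_mx P') = (P - P' \in jacobson_mx).
Proof.
apply/eqP/idP=> [e|].
  rewrite inE; apply/forallP=> a; apply/forallP=> b; apply/phi_ker=> i.
  move/ffunP: e => /(_ i)/matrixP/(_ a b).
  by rewrite !ffunE !mxE rmorphB => ->; rewrite subrr.
rewrite inE => /forallP PP'J; apply/ffunP=> i; rewrite !ffunE; apply/matrixP=> a b.
rewrite !mxE; apply/eqP; rewrite -subr_eq0 -rmorphB; apply/eqP.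
by move: (PP'J a) => /forallP/(_ b); rewrite !mxE => /phi_ker; apply.
Qed.

Lemma reduce_mx_surj y : exists P, reduce_mx P = y.
Proof.
have lift a b : exists x : R, [forall i, phi i x == y i a b].
  have [x Hx] := phi_surj (fun i => y i a b).
  by exists x; apply/forallP=> i; rewrite Hx.
exists (\matrix_(a, b) xchoose (lift a b)); apply/ffunP=> i; rewrite ffunE.
apply/matrixP=> a b; rewrite !mxE.
by move: (xchooseP (lift a b)) => /forallP/(_ i)/eqP.
Qed.

Lemma card_jacobson_mx : #|jacobson_mx| = (#|jacobson R| ^ (m * p))%N.
Proof.
pose J := {x : R | x \in jacobson R}.
have -> : jacobson_mx = [set map_mx val D | D : 'M[J]_(m, p)].
  apply/setP=> D; rewrite inE; apply/idP/imsetP=> [/forallP DJ|[E _ ->]].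
    exists (\matrix_(a, b) insubd (exist _ 0 (jacobson0 R) : J) (D a b)) => //.
    apply/matrixP=> a b; rewrite !mxE insubdK //.
    by move: (DJ a) => /forallP/(_ b).
  by apply/forallP=> a; apply/forallP=> b; rewrite mxE; apply: valP.
rewrite card_imset ?card_mx ?card_sig // => E E' /matrixP eE.
by apply/matrixP=> a b; apply: val_inj; move: (eE a b); rewrite !mxE.
Qed.

(* The fibres of reduction over S are the cosets P + M(J). *)
Lemma card_reduce_preimage (S : {set 'M[R]_(m, p)}) (G : forall i, {set 'M[F i]_(m, p)}) :
  (forall P, (P \in S) = [forall i, map_mx (phi i) P \in G i]) ->
  #|S| = (#|jacobson R| ^ (m * p) * \prod_i #|G i|)%N.
Proof.
move=> SG; rewrite -sum1_card (partition_big reduce_mx (mem (setXn G))) /=; last first.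
  by move=> P; rewrite SG => /forallP PG; apply/setXnP=> i; rewrite ffunE; apply: PG.
rewrite -cardsXn -card_jacobson_mx mulnC -sum_nat_const; apply: eq_bigr=> y yG.
have [P0 eP0] := reduce_mx_surj y; subst y.
rewrite sum1dep_card -(card_imset jacobson_mx (addrI P0)); congr #|(_ : {set _})|.
apply/setP=> P; rewrite inE; apply/andP/imsetP=> [[_]|[D DJ ->]].
  by rewrite eq_reduce_mx => PJ; exists (P - P0); rewrite // addrC subrK.
have e : reduce_mx (P0 + D) == reduce_mx P0 by rewrite eq_reduce_mx addrAC subrr add0r.
split=> //; rewrite SG; apply/forallP=> i.
by move: yG => /setXnP/(_ i); rewrite -(eqP e) ffunE.
Qed.

End ReduceMatrix.

Lemma card_GLmx_reduce m :
  #|GLmx R m| = (#|jacobson R| ^ (m * m) * \prod_i #|GLmx (F i) m|)%N.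
Proof.
apply: card_reduce_preimage => P; rewrite inE has_inv_reduce.
by apply: eq_forallb => i; rewrite inE has_inv_field det_map_mx.
Qed.

Lemma card_reduce : #|R| = (#|jacobson R| * \prod_i #|F i|)%N.
Proof.
have := @card_reduce_preimage 1 1 setT (fun i => setT).
rewrite cardsT card_mx !expn1 => ->; last by move=> P; rewrite inE; apply/esym/forallP=> i; rewrite inE.
by congr (_ * _)%N; apply: eq_bigr => i _; rewrite cardsT card_mx expn1.
Qed.

Lemma card_lower_GLmx_reduce k r : #|lower_GLmx R k r| =
  (#|jacobson R| ^ (k * k + r * r + k * r) * \prod_i #|lower_GLmx (F i) k r|)%N.
Proof.
under eq_bigr do rewrite card_lower_GLmx.
rewrite card_lower_GLmx !card_GLmx_reduce card_reduce !big_split /= expnMn.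
rewrite (big_morph (expn^~ (k * r)) (fun a b => expnMn a b _) (exp1n _)) !expnD.
ring.
Qed.

End Reduction.

Theorem mainTheorem18 (R : finComPzRingType) (l : nat)
    (F : 'I_l -> finFieldType) (phi : forall i : 'I_l, {rmorphism R -> F i})
    (phi_ker : forall x : R, (forall i, phi i x = 0) <-> x \in jacobson R)
    (phi_surj : forall y : (forall i : 'I_l, F i), exists x : R, forall i, phi i x = y i)
    (n k : nat) (hkn : (k <= n)%N) :
  #|Grassmannian R n k| =
    (#|jacobson R| ^ (k * (n - k)) * \prod_(i < l) #|Grassmannian (F i) n k|)%N.
Proof.
have [r ->] : exists r, n = (k + r)%N by exists (n - k)%N; rewrite subnKC.
rewrite addKn; set J := #|jacobson R|.
have := card_GLmx_Grassmannian R k r.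
rewrite (card_GLmx_reduce phi_ker phi_surj) (card_lower_GLmx_reduce phi_ker phi_surj).
under eq_bigr do rewrite card_GLmx_Grassmannian.
have -> : ((k + r) * (k + r) = k * r + (k * k + r * r + k * r))%N by ring.
rewrite big_split /= expnD => eGL.
have stab_gt0 : (0 < J ^ (k * k + r * r + k * r) * \prod_i #|lower_GLmx (F i) k r|)%N.
  have J_gt0 : (0 < J)%N by apply/card_gt0P; exists 0; apply: jacobson0.
  rewrite muln_gt0 expn_gt0 J_gt0 prodn_gt0 // => i.
  by apply/card_gt0P; exists 1%:M; apply: lower_GLmx1.
by apply/eqP; rewrite -(eqn_pmul2r stab_gt0) -eGL mulnACA.
Qed.
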